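(* Let $\Omega$ be a finite set, $n\ge 1$, and let $P_i,Q_i$ ($i=1,\dots,n$) be strictly positive probability mass functions on $\Omega$. For each $i$ define the finite positive measure on $\mathbb R$ \[ \eta_i:=\sum_{\omega\in\Omega}\sqrt{P_i(\omega)Q_i(\omega)}\,\delta_{\frac12\log\frac{P_i(\omega)}{Q_i(\omega)}}, \] where $\delta_u$ is the Dirac mass at $u\in\mathbb R$. Then \[ \mathrm{TV}\Big(\bigotimes_{i=1}^n P_i,\bigotimes_{i=1}^n Q_i\Big)=T(\eta_1*\cdots*\eta_n), \] where for a finite positive measure $\eta$ on $\mathbb R$, $T(\eta):=\frac12\int_{\mathbb R}|e^x-e^{-x}|\,\eta(dx)$.
   Context: $*$ denotes convolution of finite positive measures on $\mathbb R$ (the pushforward of the product measure under addition). For probability measures $\mu,\nu$ on a finite set, $\mathrm{TV}(\mu,\nu)=\frac12\sum_\omega|\mu(\omega)-\nu(\omega)|$. *)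

From mathcomp Require Import all_boot all_order all_algebra.
From mathcomp Require Import reals sequences exp.
Set Implicit Arguments. Unset Strict Implicit. Unset Printing Implicit Defensive.
Import Order.TTheory GRing.Theory Num.Theory.
Local Open Scope ring_scope.

(* A finite positive measure on R with finite support (a finite nonnegative
   combination of Dirac masses) is represented by a list of (atom, weight)
   pairs:  [:: (a_1,w_1); ...; (a_k,w_k)]  stands for  \sum_j w_j \delta_{a_j}. *)
Definition fmeas (R : realType) := seq (R * R).

Definition fmeas_val (R : realType) (m : fmeas R) (A : pred R) : R :=
  \sum_(p <- m | p.1 \in A) p.2.

Definition fmeas_int (R : realType) (m : fmeas R) (f : R -> R) : R :=
  \sum_(p <- m) p.2 * f p.1.

(* convolution = pushforward under addition of the product measure:
   (\sum w_j \delta_{a_j}) * (\sum v_k \delta_{b_k}) = \sum w_j v_k \delta_{a_j+b_k} *)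
Definition fmeas_conv (R : realType) (m1 m2 : fmeas R) : fmeas R :=
  [seq (p.1 + q.1, p.2 * q.2) | p <- m1, q <- m2].

Definition fmeas_conv_big (R : realType) (n : nat) (eta : 'I_n -> fmeas R)
  : fmeas R := \big[@fmeas_conv R/[:: (0, 1)]]_(i < n) eta i.

Definition eta_of (R : realType) (Omega : finType) (P Q : Omega -> R) : fmeas R :=
  [seq (ln (P w / Q w) / 2, Num.sqrt (P w * Q w)) | w <- enum Omega].

Definition Tfun (R : realType) (m : fmeas R) : R :=
  fmeas_int m (fun x => `|expR x - expR (- x)|) / 2.

Definition prod_pmf (R : realType) (Omega : finType) (n : nat)
  (P : 'I_n -> Omega -> R) (w : {ffun 'I_n -> Omega}) : R :=
  \prod_(i < n) P i (w i).

Definition TV (R : realType) (X : finType) (mu nu : X -> R) : R :=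
  (\sum_(x : X) `|mu x - nu x|) / 2.

Definition pos_pmf (R : realType) (Omega : finType) (P : Omega -> R) : Prop :=
  (forall w, 0 < P w) /\ \sum_(w : Omega) P w = 1.

(** The product densities factor through the atoms of the eta_i: with
    a = log(p/q)/2 and weight sqrt(p q) one has sqrt(p q) e^a = p and
    sqrt(p q) e^-a = q.  Multiplying over the coordinates of a point w of
    Omega^n, the weights multiply and the atoms add, so
    |prod_i P_i(w_i) - prod_i Q_i(w_i)| = (prod_i sqrt(P_i Q_i)) |e^s - e^-s|
    with s = sum_i a_i(w_i).  The atoms and weights of eta_1 * ... * eta_n are
    exactly these sums and products, indexed by w, so summing over w gives the
    identity. *)
From mathcomp Require Import all_boot all_order all_algebra.
From mathcomp Require Import reals sequences exp.
From mathcomp Require Import ring.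
Import Order.TTheory GRing.Theory Num.Theory.
Local Open Scope ring_scope.

Lemma big_fmeas_conv (R : realType) (V : nmodType) (m1 m2 : fmeas R)
    (F : R * R -> V) :
  \sum_(p <- fmeas_conv m1 m2) F p =
  \sum_(p <- m1) \sum_(q <- m2) F (p.1 + q.1, p.2 * q.2).
Proof. by rewrite big_allpairs_dep. Qed.

Lemma sum_ffun_ord_recl (V : nmodType) (T : finType) (n : nat)
    (F : T -> {ffun 'I_n -> T} -> V) :
  \sum_(w : {ffun 'I_n.+1 -> T}) F (w ord0) [ffun i => w (lift ord0 i)] =
  \sum_(t : T) \sum_(w : {ffun 'I_n -> T}) F t w.
Proof.
rewrite pair_big /=.
pose cons_ffun (x : T * {ffun 'I_n -> T}) : {ffun 'I_n.+1 -> T} :=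
  [ffun i => if unlift ord0 i is Some j then x.2 j else x.1].
pose uncons_ffun (w : {ffun 'I_n.+1 -> T}) :=
  (w ord0, [ffun i => w (lift ord0 i)]).
rewrite (reindex uncons_ffun) //=.
exists cons_ffun => [w _ | [t w] _]; rewrite /cons_ffun /uncons_ffun.
- by apply/ffunP => i; rewrite !ffunE; case: unliftP => [j|] ->; rewrite ?ffunE.
- congr pair; first by rewrite ffunE unlift_none.
  by apply/ffunP => j; rewrite !ffunE liftK.
Qed.

Lemma fmeas_conv_big0 (R : realType) (eta : 'I_0 -> fmeas R) :
  fmeas_conv_big eta = [:: (0, 1)].
Proof. exact: big_ord0. Qed.

Lemma fmeas_conv_big_recl (R : realType) (n : nat) (eta : 'I_n.+1 -> fmeas R) :
  fmeas_conv_big eta =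
  fmeas_conv (eta ord0) (fmeas_conv_big (fun i => eta (lift ord0 i))).
Proof. exact: big_ord_recl. Qed.

Lemma big_fmeas_conv_big_map (R : realType) (V : nmodType) (T : finType)
    (n : nat) (a wt : 'I_n -> T -> R) (F : R * R -> V) :
  \sum_(p <- fmeas_conv_big (fun i => [seq (a i t, wt i t) | t <- enum T])) F p =
  \sum_(w : {ffun 'I_n -> T}) F (\sum_i a i (w i), \prod_i wt i (w i)).
Proof.
elim: n a wt F => [|n IHn] a wt F.
  rewrite fmeas_conv_big0 big_seq1.
  under eq_bigr do rewrite !big_ord0.
  by rewrite sumr_const card_ffun card_ord expn0.
rewrite fmeas_conv_big_recl big_fmeas_conv big_map big_enum /=.
under eq_bigr => t _ do
  rewrite (IHn _ _ (fun q => F (a ord0 t + q.1, wt ord0 t * q.2))).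
rewrite -(@sum_ffun_ord_recl _ _ _ (fun t (w : {ffun 'I_n -> T}) =>
  F (a ord0 t + \sum_i a (lift ord0 i) (w i),
     wt ord0 t * \prod_i wt (lift ord0 i) (w i)))).
apply: eq_bigr => w _; rewrite big_ord_recl [\prod_(_ < n.+1) _]big_ord_recl.
by congr (F (_ + _, _ * _)); apply: eq_bigr => i _; rewrite ffunE.
Qed.

Lemma expR_half_ln (R : realType) (x : R) : 0 < x ->
  expR (ln x / 2) = Num.sqrt x.
Proof.
move=> x_gt0; rewrite -[LHS]ger0_norm ?expR_ge0 // -sqrtr_sqr expr2 -expRD.
by rewrite -splitr lnK.
Qed.

Lemma sqrt_mul_expR_half_ln (R : realType) (p q : R) : 0 < p -> 0 < q ->
  Num.sqrt (p * q) * expR (ln (p / q) / 2) = p.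
Proof.
move=> p_gt0 q_gt0; rewrite expR_half_ln ?divr_gt0 // -sqrtrM ?mulr_ge0 ?ltW //.
have -> : p * q * (p / q) = p ^+ 2 by field; rewrite gt_eqF.
by rewrite sqrtr_sqr gtr0_norm.
Qed.

Lemma sqrt_mul_expRN_half_ln (R : realType) (p q : R) : 0 < p -> 0 < q ->
  Num.sqrt (p * q) * expR (- (ln (p / q) / 2)) = q.
Proof.
move=> p_gt0 q_gt0.
rewrite -mulNr -lnV ?posrE ?divr_gt0 // invf_div [p * q]mulrC.
exact: sqrt_mul_expR_half_ln.
Qed.

Lemma prodrB_sqrt_mul_expR (R : realType) (I : finType) (p q : I -> R) :
    (forall i, 0 < p i) -> (forall i, 0 < q i) ->
  \prod_i p i - \prod_i q i =
  \prod_i Num.sqrt (p i * q i) *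
    (expR (\sum_i ln (p i / q i) / 2) - expR (- \sum_i ln (p i / q i) / 2)).
Proof.
move=> p_gt0 q_gt0; rewrite -sumrN !expR_sum mulrBr -!big_split /=.
by congr (_ - _); apply: eq_bigr => i _;
  rewrite ?sqrt_mul_expR_half_ln ?sqrt_mul_expRN_half_ln.
Qed.

Theorem theorem1 (R : realType) (Omega : finType) (n : nat) (hn : (0 < n)%N)
  (P Q : 'I_n -> Omega -> R)
  (hP : forall i, pos_pmf (P i)) (hQ : forall i, pos_pmf (Q i)) :
  TV (prod_pmf P) (prod_pmf Q)
  = Tfun (fmeas_conv_big (fun i => eta_of (P i) (Q i))).
Proof.
rewrite /Tfun /fmeas_int /eta_of big_fmeas_conv_big_map /TV /prod_pmf.
congr (_ / 2); apply: eq_bigr => w _.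
have P_gt0 i : 0 < P i (w i) by case: (hP i).
have Q_gt0 i : 0 < Q i (w i) by case: (hQ i).
rewrite prodrB_sqrt_mul_expR //= normrM ger0_norm //.
by apply: prodr_ge0 => i _; apply: sqrtr_ge0.
Qed.
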